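(* Let $(X,d)$ be a compact metric space and let $f:X\to X$ be an arbitrary map (no continuity assumed). If $(x_k)_{k\in\mathbb{N}}$ is a sequence in $CR_f$ such that $x_k\,\mathcal{C}\,x_{k+1}$ for every $k$, then there exists $y\in CR_f$ such that $x_k\,\mathcal{C}\,y$ for every $k\in\mathbb{N}$.
   Context: For a metric space $(X,d)$ and map $f:X\to X$: an $\varepsilon$-chain from $x$ to $y$ is a finite sequence $x_0=x,\dots,x_n=y$, $n\ge1$, with $d(f(x_i),x_{i+1})<\varepsilon$ for all $i$; $x\,\mathcal{C}\,y$ iff for every $\varepsilon>0$ there is an $\varepsilon$-chain from $x$ to $y$; $CR_f=\{x\in X:x\,\mathcal{C}\,x\}$. *)

From HB Require Import structures.
From mathcomp Require Import all_boot all_order all_algebra.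
From mathcomp Require Import all_classical all_reals all_analysis.
Set Implicit Arguments. Unset Strict Implicit. Unset Printing Implicit Defensive.
Import Order.TTheory GRing.Theory Num.Theory.
Local Open Scope ring_scope.

Definition eps_chain {R : realType} {X : metricType R} (f : X -> X)
    (eps : R) (x y : X) : Prop :=
  exists (n : nat) (s : nat -> X),
    (0 < n)%N /\ s 0%N = x /\ s n = y /\
    forall i : nat, (i < n)%N -> mdist (f (s i)) (s i.+1) < eps.

Definition chain_rel {R : realType} {X : metricType R} (f : X -> X)
    (x y : X) : Prop :=
  forall eps : R, 0 < eps -> eps_chain f eps x y.

Definition chain_recurrent {R : realType} {X : metricType R} (f : X -> X)
    : set X := [set x | chain_rel f x x].

(* The forward sets C(z) = [set w | z C w] are closed and nonempty (they
   contain f z), and z C w gives C(w) `<=` C(z). Among the points z lying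
   chain-after every x_k, compactness lets any chain of forward sets, ordered
   by inclusion, be bounded below by the forward set of a common successor,
   so Zorn's lemma yields such a z whose forward set is minimal. Since f z is
   again such a point and C(f z) `<=` C(z), minimality forces C(f z) = C(z),
   which contains f z: hence y := f z is chain recurrent. *)
From HB Require Import structures.
From mathcomp Require Import all_boot all_order all_algebra.
From mathcomp Require Import all_classical all_reals all_analysis.
Import Order.TTheory GRing.Theory Num.Theory.
Local Open Scope classical_set_scope.
Local Open Scope ring_scope.

Lemma compact_nested_closed_bigcap {T : topologicalType} {I : Type}
    {D : set I} {F : I -> set T} :
  compact [set: T] -> D !=set0 ->
  (forall i, D i -> closed (F i)) -> (forall i, D i -> F i !=set0) ->
  total_on D (fun i j => F i `<=` F j) ->
  \bigcap_(i in D) F i !=set0.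
Proof.
move=> cT [i0 Di0] clF neF tot.
have FF : Filter (filter_from D F).
  apply: filter_from_filter; first by exists i0.
  move=> i j Di Dj; have [ij|ji] := tot i j Di Dj.
    by exists i => // t Fit; split => //; exact: ij.
  by exists j => // t Fjt; split => //; exact: ji.
have [p [_ clp]] := cT _ (filter_from_proper FF neF) filterT.
exists p => i Di; apply: clF => // B pB.
by apply: clp => //; exists i.
Qed.

Section ChainRelation.
Context {R : realType} {X : metricType R} (f : X -> X).

Lemma chain_rel_trans a b c :
  chain_rel f a b -> chain_rel f b c -> chain_rel f a c.
Proof.
move=> hab hbc eps e0.
have [n [s [n0 [s0 [sn hs]]]]] := hab eps e0.
have [m [t [m0 [t0 [tm ht]]]]] := hbc eps e0.
exists (n + m)%N, (fun i => if (i <= n)%N then s i else t (i - n)%N).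
split; first by rewrite addn_gt0 n0.
split; first by rewrite leq0n.
split; first by rewrite leqNgt -{1}(addn0 n) ltn_add2l m0 /= addKn.
move=> i lti; case: (ltnP i n) => hin.
  by rewrite /= (ltnW hin); apply: hs.
have -> : (if (i <= n)%N then s i else t (i - n)%N) = t (i - n)%N.
  case: ifP => // hin'.
  have -> : i = n by apply/eqP; rewrite eqn_leq hin' hin.
  by rewrite subnn sn t0.
by rewrite subSn //; apply: ht; rewrite ltn_subLR // addnC.
Qed.

Lemma chain_rel_map z : chain_rel f z (f z).
Proof.
move=> eps e0; exists 1%N, (fun i => if i is 0%N then z else f z).
do 3!split => //.
by move=> i; rewrite ltnS leqn0 => /eqP -> /=; rewrite mdistxx.
Qed.

Lemma chain_rel_subset {a b} : chain_rel f a b -> chain_rel f b `<=` chain_rel f a.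
Proof. by move=> hab c; exact: chain_rel_trans. Qed.

Lemma closed_chain_rel z : closed (chain_rel f z).
Proof.
move=> p clp eps e0.
have e20 : 0 < eps / 2 by rewrite divr_gt0.
have [v [hv]] := clp _ (nbhsx_ballx _ _ e20).
rewrite ballEmdist /= => dpv.
have [n [s [n0 [s0 [sn hs]]]]] := hv _ e20.
(* Replace the endpoint v of an (eps/2)-chain by p: the last jump grows by less than eps/2. *)
exists n, (fun i => if i == n then p else s i).
split => //; split; first by rewrite eq_sym (negbTE (lt0n_neq0 n0)).
split; first by rewrite eqxx.
move=> i lti; rewrite (ltn_eqF lti).
case: eqP => [hi|_]; last first.
  by apply: lt_trans (hs _ lti) _; rewrite ltr_pdivrMr // ltr_pMr // ltr1n.
apply: le_lt_trans (@metric_triangle _ _ _ (s n) _) _.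
rewrite (splitr eps) ltrD //; first by rewrite -hi; apply: hs.
by rewrite sn metric_sym.
Qed.

Lemma chain_rel_seq_subset (x : nat -> X) :
  (forall k, chain_rel f (x k) (x k.+1)) ->
  forall k m, (k <= m)%N -> chain_rel f (x m) `<=` chain_rel f (x k).
Proof.
move=> hC k; elim=> [|m IH]; first by rewrite leqn0 => /eqP ->.
rewrite leq_eqVlt => /orP [/eqP -> //|/IH km].
by move=> w /(chain_rel_subset (hC m)) /km.
Qed.

Hypothesis compactX : compact [set: X].

Lemma chain_rel_common_succ {D : set X} : D !=set0 ->
  total_on D (fun z w => chain_rel f z `<=` chain_rel f w) ->
  exists p, forall z, D z -> chain_rel f z p.
Proof.
move=> D0 tot.
have clD z : D z -> closed (chain_rel f z) by move=> _; exact: closed_chain_rel.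
have neD z : D z -> chain_rel f z !=set0.
  by move=> _; exists (f z); exact: chain_rel_map.
have [p Dp] := compact_nested_closed_bigcap compactX D0 clD neD tot.
by exists p.
Qed.

Section ForwardClosed.
Variable P : set X.
Hypothesis P0 : P !=set0.
Hypothesis P_succ : forall z w, P z -> chain_rel f z w -> P w.

Lemma exists_minimal_chain_rel :
  exists2 z, P z & forall w, P w -> chain_rel f w `<=` chain_rel f z ->
    chain_rel f z `<=` chain_rel f w.
Proof.
have [z0 Pz0] := P0.
pose le (a b : {z | P z}) := `[< chain_rel f (sval b) `<=` chain_rel f (sval a) >].
have [| | |[z Pz] zmin] := @ZL_preorder _ (exist _ z0 Pz0) le.
- by move=> a; apply/asboolP.
- move=> a b c /asboolP ab /asboolP bc; apply/asboolP.
  exact: subset_trans ab.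
- move=> A totA; have [[a Aa]|A0] := pselect (A !=set0); last first.
    by exists (exist _ z0 Pz0) => a Aa; exfalso; apply: A0; exists a.
  have totA' : total_on (sval @` A)
      (fun z w => chain_rel f z `<=` chain_rel f w).
    move=> _ _ [b Ab <-] [c Ac <-].
    by have [/asboolP|/asboolP] := totA _ _ Ab Ac; [right|left].
  have [p hp] := chain_rel_common_succ (ex_intro _ _ (imageP sval Aa)) totA'.
  have Pp : P p by apply: (P_succ _ _ (svalP a)); apply: hp; exists a.
  exists (exist _ p Pp) => b Ab; apply/asboolP => /=.
  by apply: chain_rel_subset; apply: hp; exists b.
exists z => // w Pw wz.
suff /asboolP : le (exist _ w Pw) (exist _ z Pz) by [].
by apply: zmin; apply/asboolP.
Qed.

Lemma exists_chain_recurrent : exists2 y, P y & chain_recurrent f y.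
Proof.
have [z Pz zmin] := exists_minimal_chain_rel.
have Pfz : P (f z) := P_succ _ _ Pz (chain_rel_map z).
exists (f z) => //.
apply: (zmin _ Pfz); first exact/chain_rel_subset/chain_rel_map.
exact: chain_rel_map.
Qed.

End ForwardClosed.

End ChainRelation.

Theorem lemma3p5 (R : realType) (X : metricType R) (f : X -> X)
    (hX : compact [set: X]) (x : nat -> X)
    (hCR : forall k : nat, chain_recurrent f (x k))
    (hC : forall k : nat, chain_rel f (x k) (x k.+1)) :
  exists y : X, chain_recurrent f y /\ forall k : nat, chain_rel f (x k) y.
Proof.
pose P := [set z | forall k, chain_rel f (x k) z].
have P0 : P !=set0.
  have tot : total_on (range x) (fun z w => chain_rel f z `<=` chain_rel f w).
    move=> _ _ [k _ <-] [m _ <-].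
    by have [km|/ltnW mk] := leqP k m; [right|left]; apply: chain_rel_seq_subset.
  have [p hp] := chain_rel_common_succ f hX (ex_intro _ _ (imageT x 0%N)) tot.
  by exists p => k; apply: hp; exists k.
have P_succ z w : P z -> chain_rel f z w -> P w.
  by move=> Pz zw k; exact: chain_rel_trans (Pz k) zw.
have [y Py yCR] := exists_chain_recurrent f hX P P0 P_succ.
by exists y.
Qed.
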